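(* Let $R>0$ and let $K\subset\mathbb{R}^2$ be the closed disk of radius $R$ centered at the origin. Let $G\colon\mathbb{R}\to\mathbb{R}$ be twice continuously differentiable with $x^2+G(x)^2>0$ for all $x$, and define $$h(x)=x-\frac{\sqrt{x^2+G(x)^2}-R}{\sqrt{x^2+G(x)^2}}\cdot\frac{x\,(1-G'(x)^2)+2G(x)G'(x)}{1+G'(x)^2}.$$ Suppose $h$ is a bijection from $\mathbb{R}$ onto an open interval $J$ (possibly unbounded) containing $0$, with $h'(x)\ne0$ for all $x$. Then $G$ is an equidistant function (i.e. there is an admissible $f$ such that the equidistant set of $K$ and the epigraph of $f$ is the graph of $G$) if and only if the pair $x(t):=h^{-1}(t)$, $y(t):=G(x(t))$ ($t\in J$) is the equidistant parameterization for the graph of $G$, i.e. there is an admissible $f$ with $D_f=J$ and $x=x_f$, $y=y_f$ on $J$.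
   Context: $d(p,A)=\inf\{|p-q|\mid q\in A\}$ (Euclidean distance). A function $f\colon\mathbb{R}\to(0,\infty)$ is admissible if it is twice continuously differentiable, convex, and $t^2+f(t)^2>R^2$ for all $t$; its epigraph is $L_f=\{(t,y)\mid f(t)\le y\}$, and the equidistant set is $\{K=L_f\}=\{p\mid d(p,K)=d(p,L_f)\}$. For admissible $f$ put $\alpha_f(t)=\frac{tf'(t)-f(t)}{\sqrt{1+f'(t)^2}}$, $D_f=\{t\mid\alpha_f(t)<R\}$, and the equidistant parameterization $x_f,y_f\colon D_f\to\mathbb{R}$, $x_f(t)=t+\frac{f'(t)}{2\sqrt{1+f'(t)^2}}\cdot\frac{t^2+f(t)^2-R^2}{R-\alpha_f(t)}$, $y_f(t)=f(t)-\frac{1}{2\sqrt{1+f'(t)^2}}\cdot\frac{t^2+f(t)^2-R^2}{R-\alpha_f(t)}$. *)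

From Stdlib Require Import Reals.
From Coquelicot Require Import Coquelicot.
Open Scope R_scope.

Definition pt := (R * R)%type.

Definition edist (p q : pt) : R :=
  sqrt ((fst p - fst q)^2 + (snd p - snd q)^2).

Definition dist_set (p : pt) (A : pt -> Prop) : Rbar :=
  Glb_Rbar (fun r => exists q, A q /\ r = edist p q).

Definition disk (Rr : R) : pt -> Prop := fun q => fst q ^ 2 + snd q ^ 2 <= Rr ^ 2.

Definition epigraph (f : R -> R) : pt -> Prop := fun q => f (fst q) <= snd q.

Definition equidistant_set (A B : pt -> Prop) : pt -> Prop :=
  fun p => dist_set p A = dist_set p B.

Definition C2 (f : R -> R) : Prop :=
  (forall x, ex_derive f x) /\
  (forall x, ex_derive (Derive f) x) /\
  (forall x, continuous (Derive (Derive f)) x).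

Definition convex_fun (f : R -> R) : Prop :=
  forall x y l, 0 <= l <= 1 ->
    f (l * x + (1 - l) * y) <= l * f x + (1 - l) * f y.

Definition admissible (Rr : R) (f : R -> R) : Prop :=
  C2 f /\ convex_fun f /\ (forall t, 0 < f t) /\
  (forall t, t ^ 2 + f t ^ 2 > Rr ^ 2).

Definition alpha_f (f : R -> R) (t : R) : R :=
  (t * Derive f t - f t) / sqrt (1 + (Derive f t) ^ 2).

Definition D_f (Rr : R) (f : R -> R) (t : R) : Prop := alpha_f f t < Rr.

Definition x_f (Rr : R) (f : R -> R) (t : R) : R :=
  t + Derive f t / (2 * sqrt (1 + (Derive f t) ^ 2)) *
      ((t ^ 2 + f t ^ 2 - Rr ^ 2) / (Rr - alpha_f f t)).

Definition y_f (Rr : R) (f : R -> R) (t : R) : R :=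
  f t - 1 / (2 * sqrt (1 + (Derive f t) ^ 2)) *
      ((t ^ 2 + f t ^ 2 - Rr ^ 2) / (Rr - alpha_f f t)).

Definition equidistant_function (Rr : R) (G : R -> R) : Prop :=
  exists f, admissible Rr f /\
    forall p : pt, equidistant_set (disk Rr) (epigraph f) p <-> snd p = G (fst p).

Definition h_of (Rr : R) (G : R -> R) (x : R) : R :=
  x - (sqrt (x ^ 2 + G x ^ 2) - Rr) / sqrt (x ^ 2 + G x ^ 2) *
      ((x * (1 - (Derive G x) ^ 2) + 2 * G x * Derive G x) / (1 + (Derive G x) ^ 2)).

Definition rbar_interval (a b : Rbar) (t : R) : Prop := Rbar_lt a t /\ Rbar_lt t b.

From Stdlib Require Import Reals Rgeom Lra Psatz.
From Coquelicot Require Import Coquelicot.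
Open Scope R_scope.

(* A point p equidistant from K and L_f lies strictly below the graph of f, so it
   is (t + c f'(t), f t - c) with c > 0, where (t, f t) is its nearest point on the
   graph; by convexity its distance to L_f is c sqrt(1 + f'(t)^2), and equating
   this with |p| - R forces t in D_f and p = (x_f t, y_f t).  Hence the
   equidistant set is exactly the curve (x_f, y_f) on D_f.  When this curve is the
   graph of G, a first-order condition at x_f t gives h (x_f t) = t, so h inverts
   x_f on D_f, and both directions follow by transporting parameters through h
   and its inverse. *)

Definition pnorm (p : pt) : R := sqrt (fst p ^ 2 + snd p ^ 2).

Lemma edist_eq_of_sq (p q : pt) (s : R) : 0 <= s ->
  (fst p - fst q) ^ 2 + (snd p - snd q) ^ 2 = s ^ 2 -> edist p q = s.
Proof. intros Hs H. unfold edist. rewrite H. now apply sqrt_pow2. Qed.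

Lemma edist_ge_of_sq (p q : pt) (s : R) : 0 <= s ->
  s ^ 2 <= (fst p - fst q) ^ 2 + (snd p - snd q) ^ 2 -> s <= edist p q.
Proof.
  intros Hs H. unfold edist. rewrite <- (sqrt_pow2 s Hs). now apply sqrt_le_1_alt.
Qed.

Lemma edist_triangle (p q r : pt) : edist p r <= edist p q + edist q r.
Proof.
  pose proof (triangle (fst p) (snd p) (fst r) (snd r) (fst q) (snd q)) as T.
  unfold dist_euc in T. rewrite !Rsqr_pow2 in T. exact T.
Qed.

Lemma edist_origin (p : pt) : edist p (0, 0) = pnorm p.
Proof. unfold edist, pnorm; cbn [fst snd]. f_equal. ring. Qed.

Lemma disk_iff_pnorm (Rr : R) (q : pt) : 0 <= Rr -> disk Rr q <-> pnorm q <= Rr.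
Proof.
  intros HR. unfold disk, pnorm. split; intro H.
  - rewrite <- (sqrt_pow2 Rr HR). now apply sqrt_le_1_alt.
  - rewrite <- (pow2_sqrt (fst q ^ 2 + snd q ^ 2)) by nra.
    apply pow_incr. split; [apply sqrt_pos | exact H].
Qed.

Lemma dist_set_le (p : pt) (A : pt -> Prop) (q : pt) :
  A q -> Rbar_le (dist_set p A) (edist p q).
Proof. intro Hq. apply (proj1 (Glb_Rbar_correct _)). now exists q. Qed.

Lemma dist_set_ge (p : pt) (A : pt -> Prop) (s : R) :
  (forall q, A q -> s <= edist p q) -> Rbar_le s (dist_set p A).
Proof.
  intro H. apply (proj2 (Glb_Rbar_correct _)). intros r [q [Hq ->]]. now apply H.
Qed.

Lemma dist_set_attained (p : pt) (A : pt -> Prop) (q : pt) :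
  A q -> (forall q', A q' -> edist p q <= edist p q') -> dist_set p A = edist p q.
Proof.
  intros Hq Hmin. apply Rbar_le_antisym; [now apply dist_set_le | now apply dist_set_ge].
Qed.

Lemma dist_set_mem (p : pt) (A : pt -> Prop) : A p -> dist_set p A = 0.
Proof.
  intro Hp. assert (E : edist p p = 0).
  { apply edist_eq_of_sq; [lra | ring]. }
  rewrite <- E. apply dist_set_attained; [exact Hp |].
  intros q _. rewrite E. apply sqrt_pos.
Qed.

Lemma dist_disk (Rr : R) (p : pt) :
  0 <= Rr -> dist_set p (disk Rr) = Rmax 0 (pnorm p - Rr).
Proof.
  intros HR. destruct (Rle_lt_dec (pnorm p) Rr) as [Hin | Hout].
  - rewrite Rmax_left by lra. apply dist_set_mem, disk_iff_pnorm; auto.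
  - rewrite Rmax_right by lra.
    set (r := pnorm p) in *.
    assert (Hr2 : r ^ 2 = fst p ^ 2 + snd p ^ 2) by (apply pow2_sqrt; nra).
    set (q := (Rr / r * fst p, Rr / r * snd p)).
    assert (Hpq : edist p q = r - Rr).
    { apply edist_eq_of_sq; [lra |]. unfold q; cbn [fst snd].
      replace ((fst p - Rr / r * fst p) ^ 2 + (snd p - Rr / r * snd p) ^ 2)
        with ((r - Rr) ^ 2 / r ^ 2 * (fst p ^ 2 + snd p ^ 2)) by (field; lra).
      rewrite <- Hr2. field. lra. }
    rewrite <- Hpq. apply dist_set_attained.
    + unfold disk, q; cbn [fst snd]. right.
      replace ((Rr / r * fst p) ^ 2 + (Rr / r * snd p) ^ 2)
        with (Rr ^ 2 / r ^ 2 * (fst p ^ 2 + snd p ^ 2)) by (field; lra).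
      rewrite <- Hr2. field. lra.
    + intros q' Hq'. apply disk_iff_pnorm in Hq'; [| exact HR].
      pose proof (edist_triangle p q' (0, 0)) as T. rewrite !edist_origin in T.
      fold r in T. lra.
Qed.

Lemma derive_le_of_chord_bound (g : R -> R) (d K : R) :
  is_derive g 0 d -> (forall l, 0 < l <= 1 -> g l - g 0 <= l * K) -> d <= K.
Proof.
  intros Hd Hchord. apply is_derive_Reals in Hd.
  apply Rnot_lt_le. intro HKd.
  destruct (Hd (d - K) ltac:(lra)) as [delta Hdelta].
  pose proof (cond_pos delta) as Hdelta0.
  set (l := Rmin 1 (delta / 2)).
  assert (Hl : 0 < l <= 1).
  { split; [apply Rmin_glb_lt; lra | apply Rmin_l]. }
  assert (Hl_delta : Rabs l < delta).
  { rewrite Rabs_pos_eq by lra. pose proof (Rmin_r 1 (delta / 2)) as Hl_half.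
    fold l in Hl_half. lra. }
  specialize (Hdelta l ltac:(lra) Hl_delta). rewrite Rplus_0_l in Hdelta.
  apply Rabs_def2 in Hdelta.
  assert (E : (g l - g 0) / l * l = g l - g 0) by (field; lra).
  pose proof (Hchord l Hl). nra.
Qed.

Lemma convex_tangent_le (f : R -> R) (t y : R) :
  convex_fun f -> ex_derive f t -> f t + Derive f t * (y - t) <= f y.
Proof.
  intros Hc Hd.
  set (g := fun l => f (t + l * (y - t))).
  assert (Dg : is_derive g 0 (Derive f t * (y - t))).
  { unfold g. auto_derive.
    - now rewrite Rmult_0_l, Rplus_0_r.
    - rewrite Rmult_0_l, Rplus_0_r. change (fun x : R => f x) with f. ring. }
  enough (Derive f t * (y - t) <= f y - f t) by lra.
  apply (derive_le_of_chord_bound g); [exact Dg |].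
  intros l Hl. unfold g. pose proof (Hc y t l ltac:(lra)) as Hcl.
  replace (t + l * (y - t)) with (l * y + (1 - l) * t) by ring.
  replace (t + 0 * (y - t)) with t by ring. lra.
Qed.

Lemma is_derive_global_min (g : R -> R) (x0 l : R) :
  (forall x, g x0 <= g x) -> is_derive g x0 l -> l = 0.
Proof.
  intros Hm Hd. apply is_derive_Reals in Hd.
  change l with (derive_pt g x0 (exist _ l Hd)).
  apply (deriv_minimum g (x0 - 1) (x0 + 1)); try lra. intros; apply Hm.
Qed.

Lemma is_derive_global_max (g : R -> R) (x0 l : R) :
  (forall x, g x <= g x0) -> is_derive g x0 l -> l = 0.
Proof.
  intros Hm Hd. apply is_derive_Reals in Hd.
  change l with (derive_pt g x0 (exist _ l Hd)).
  apply (deriv_maximum g (x0 - 1) (x0 + 1)); try lra. intros; apply Hm.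
Qed.

Lemma continuity_pt_of_ex_derive (f : R -> R) (x : R) : ex_derive f x -> continuity_pt f x.
Proof.
  intro H. apply continuity_pt_filterlim.
  exact (@ex_derive_continuous R_AbsRing R_NormedModule f x H).
Qed.

Lemma continuous_global_min (g : R -> R) (x0 M : R) : 0 < M ->
  (forall x, continuity_pt g x) -> (forall x, M < Rabs (x - x0) -> g x0 <= g x) ->
  exists m, forall x, g m <= g x.
Proof.
  intros HM Hcont Hfar.
  destruct (continuity_ab_min g (x0 - M) (x0 + M)) as [m [Hm _]];
    [lra | intros; apply Hcont |].
  exists m. intro x. destruct (Rle_lt_dec (Rabs (x - x0)) M) as [Hnear | Hout].
  - now apply Hm, Rabs_le_between'.
  - apply Rle_trans with (g x0); [apply Hm; lra | now apply Hfar].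
Qed.

Definition slope_norm (f : R -> R) (t : R) : R := sqrt (1 + Derive f t ^ 2).

Definition normal_point (f : R -> R) (t c : R) : pt := (t + c * Derive f t, f t - c).

Lemma slope_norm_ge_1 (f : R -> R) (t : R) : 1 <= slope_norm f t.
Proof.
  unfold slope_norm. rewrite <- sqrt_1 at 1. apply sqrt_le_1_alt.
  pose proof (pow2_ge_0 (Derive f t)). lra.
Qed.

Lemma slope_norm_sq (f : R -> R) (t : R) : slope_norm f t ^ 2 = 1 + Derive f t ^ 2.
Proof. apply pow2_sqrt. pose proof (pow2_ge_0 (Derive f t)). lra. Qed.

Lemma edist_normal_point (f : R -> R) (t c : R) : 0 <= c ->
  edist (normal_point f t c) (t, f t) = c * slope_norm f t.
Proof.
  intro Hc. pose proof (slope_norm_ge_1 f t).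
  apply edist_eq_of_sq; [nra |]. unfold normal_point; cbn [fst snd].
  rewrite Rpow_mult_distr, slope_norm_sq. ring.
Qed.

Lemma dist_normal_point_epigraph (f : R -> R) (t c : R) :
  convex_fun f -> ex_derive f t -> 0 <= c ->
  dist_set (normal_point f t c) (epigraph f) = c * slope_norm f t.
Proof.
  intros Hconv Hd Hc. rewrite <- edist_normal_point by exact Hc.
  apply dist_set_attained; [unfold epigraph; cbn [fst snd]; lra |].
  intros [z1 z2] Hz. unfold epigraph in Hz; cbn [fst snd] in Hz.
  pose proof (slope_norm_ge_1 f t).
  rewrite edist_normal_point by exact Hc. apply edist_ge_of_sq; [nra |].
  unfold normal_point; cbn [fst snd]. rewrite Rpow_mult_distr, slope_norm_sq.
  pose proof (convex_tangent_le f t z1 Hconv Hd) as Htan.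
  set (l := Derive f t) in *.
  (* (z1, z2) lies above the tangent line at t *)
  assert (0 <= c * (l * (t - z1) - f t + z2)) by (apply Rmult_le_pos; nra).
  pose proof (pow2_ge_0 (t - z1)). pose proof (pow2_ge_0 (f t - z2)). nra.
Qed.

Lemma below_graph_normal_point (f : R -> R) (p1 p2 : R) :
  (forall x, ex_derive f x) -> p2 < f p1 ->
  exists t c, 0 < c /\ (p1, p2) = normal_point f t c.
Proof.
  intros Hd Hp.
  set (g := fun u => (p1 - u) ^ 2 + (p2 - f u) ^ 2).
  assert (Dg : forall u, is_derive g u (-2 * (p1 - u) - 2 * (p2 - f u) * Derive f u)).
  { intro u. unfold g. auto_derive; [apply Hd |]. change (fun x : R => f x) with f. ring. }
  assert (Hcont : forall x, continuity_pt f x).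
  { intro x. apply continuity_pt_of_ex_derive, Hd. }
  destruct (continuous_global_min g p1 (Rabs (f p1 - p2) + 1)) as [t Ht].
  - pose proof (Rabs_pos (f p1 - p2)). lra.
  - intro x. apply continuity_pt_of_ex_derive. eexists. apply Dg.
  - intros x Hx. unfold g.
    replace ((p1 - p1) ^ 2 + (p2 - f p1) ^ 2) with (Rabs (f p1 - p2) ^ 2)
      by (rewrite pow2_abs; ring).
    replace ((p1 - x) ^ 2) with (Rabs (x - p1) ^ 2) by (rewrite pow2_abs; ring).
    pose proof (Rabs_pos (f p1 - p2)). pose proof (pow2_ge_0 (p2 - f x)). nra.
  - pose proof (is_derive_global_min g t _ Ht (Dg t)) as Hcrit.
    exists t, (f t - p2). split; [| unfold normal_point; f_equal; lra].
    apply Rnot_le_lt. intro Hc.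
    (* otherwise the graph crosses the level p2 between t and p1, at a point
       closer to (p1, p2) than (t, f t) *)
    destruct (IVT_gen f t p1 p2 Hcont) as [u [Hu Hfu]].
    { split; [apply Rle_trans with (f t); [apply Rmin_l | lra]
             | apply Rle_trans with (f p1); [lra | apply Rmax_r]]. }
    pose proof (Ht u) as Hgu. unfold g in Hgu. rewrite Hfu in Hgu.
    assert ((p1 - u) ^ 2 <= (p1 - t) ^ 2).
    { unfold Rmin, Rmax in Hu. destruct (Rle_dec t p1); nra. }
    assert (f t = p2) by nra.
    assert (t = p1) by nra. subst t. lra.
Qed.

Definition equid_dist (Rr : R) (f : R -> R) (t : R) : R :=
  (t ^ 2 + f t ^ 2 - Rr ^ 2) / (2 * (Rr - alpha_f f t)).

Lemma xy_f_normal_point (Rr : R) (f : R -> R) (t : R) : alpha_f f t <> Rr ->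
  (x_f Rr f t, y_f Rr f t) = normal_point f t (equid_dist Rr f t / slope_norm f t).
Proof.
  intro Hal. pose proof (slope_norm_ge_1 f t).
  unfold x_f, y_f, normal_point, equid_dist. fold (slope_norm f t).
  f_equal; field; split; lra.
Qed.

Lemma sqnorm_normal_point (f : R -> R) (t c : R) :
  fst (normal_point f t c) ^ 2 + snd (normal_point f t c) ^ 2 =
  t ^ 2 + f t ^ 2 + 2 * (c * slope_norm f t) * alpha_f f t + (c * slope_norm f t) ^ 2.
Proof.
  pose proof (slope_norm_ge_1 f t).
  unfold normal_point, alpha_f; cbn [fst snd]. fold (slope_norm f t).
  replace (2 * (c * slope_norm f t) * ((t * Derive f t - f t) / slope_norm f t))
    with (2 * c * (t * Derive f t - f t)) by (field; lra).
  rewrite Rpow_mult_distr, slope_norm_sq. ring.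
Qed.

Lemma equidistant_pnorm_sub_le (Rr : R) (f : R -> R) (p q : pt) : 0 <= Rr ->
  equidistant_set (disk Rr) (epigraph f) p -> epigraph f q -> pnorm p - Rr <= edist p q.
Proof.
  intros HR Heq Hq. pose proof (dist_set_le p (epigraph f) q Hq) as Hle.
  rewrite <- Heq, dist_disk in Hle by lra.
  change (Rmax 0 (pnorm p - Rr) <= edist p q) in Hle.
  pose proof (Rmax_r 0 (pnorm p - Rr)). lra.
Qed.

Section Equidistant.

Variables (Rr : R) (f : R -> R).
Hypothesis HR : 0 < Rr.
Hypothesis Hadm : admissible Rr f.

Let Hderiv : forall x, ex_derive f x := proj1 (proj1 Hadm).
Let Hconv : convex_fun f := proj1 (proj2 Hadm).
Let Hpos : forall t, 0 < f t := proj1 (proj2 (proj2 Hadm)).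
Let Hout : forall t, t ^ 2 + f t ^ 2 > Rr ^ 2 := proj2 (proj2 (proj2 Hadm)).

Lemma equidistant_normal_point_iff (t c : R) : 0 < c ->
  equidistant_set (disk Rr) (epigraph f) (normal_point f t c) <->
  pnorm (normal_point f t c) = Rr + c * slope_norm f t.
Proof.
  intro Hc. pose proof (slope_norm_ge_1 f t).
  unfold equidistant_set.
  rewrite dist_disk, dist_normal_point_epigraph by (auto; lra).
  rewrite Rbar_finite_eq. unfold Rmax.
  destruct (Rle_dec 0 _); split; intro; nra.
Qed.

Lemma pnorm_normal_point_iff (t c : R) : 0 < c ->
  pnorm (normal_point f t c) = Rr + c * slope_norm f t <->
  D_f Rr f t /\ c * slope_norm f t = equid_dist Rr f t.
Proof.
  intro Hc. pose proof (slope_norm_ge_1 f t). pose proof (Hout t).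
  pose proof (sqnorm_normal_point f t c) as Hsq.
  set (s := c * slope_norm f t) in *.
  assert (Hs : 0 < s) by (unfold s; nra).
  unfold D_f, equid_dist. unfold pnorm. rewrite Hsq.
  split.
  - intro Hn. apply (f_equal (fun x => x ^ 2)) in Hn.
    rewrite pow2_sqrt in Hn by (rewrite <- Hsq; nra).
    assert (Hal : alpha_f f t < Rr) by nra.
    split; [exact Hal | field_simplify_eq; nra].
  - intros [Hal Hse].
    assert (E : t ^ 2 + f t ^ 2 + 2 * s * alpha_f f t + s ^ 2 = (Rr + s) ^ 2).
    { rewrite Hse. field_simplify_eq; [ring | lra]. }
    rewrite E. apply sqrt_pow2. lra.
Qed.

Lemma equidistant_xy_f (t : R) : D_f Rr f t ->
  equidistant_set (disk Rr) (epigraph f) (x_f Rr f t, y_f Rr f t).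
Proof.
  intro HD. unfold D_f in HD. pose proof (slope_norm_ge_1 f t). pose proof (Hout t).
  rewrite xy_f_normal_point by lra.
  assert (Hc : 0 < equid_dist Rr f t / slope_norm f t).
  { apply Rdiv_lt_0_compat; [apply Rdiv_lt_0_compat |]; lra. }
  apply (equidistant_normal_point_iff _ _ Hc), (pnorm_normal_point_iff _ _ Hc).
  split; [exact HD | field; lra].
Qed.

Lemma equidistant_below_graph (p : pt) :
  equidistant_set (disk Rr) (epigraph f) p -> snd p < f (fst p).
Proof.
  intro Heq. apply Rnot_le_lt. intro Hepi.
  unfold equidistant_set in Heq.
  rewrite (dist_set_mem p (epigraph f)) in Heq by exact Hepi.
  rewrite dist_disk in Heq by lra. apply Rbar_finite_eq in Heq.
  assert (Hfar : ~ disk Rr p).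
  { unfold disk. pose proof (Hout (fst p)). pose proof (Hpos (fst p)). nra. }
  rewrite disk_iff_pnorm in Hfar by lra.
  unfold Rmax in Heq. destruct (Rle_dec 0 (pnorm p - Rr)); lra.
Qed.

Lemma equidistant_is_xy_f (p : pt) :
  equidistant_set (disk Rr) (epigraph f) p ->
  exists t, D_f Rr f t /\ p = (x_f Rr f t, y_f Rr f t).
Proof.
  intro Heq. pose proof (equidistant_below_graph p Heq) as Hbelow.
  destruct p as [p1 p2]; cbn [fst snd] in Hbelow.
  destruct (below_graph_normal_point f p1 p2 Hderiv Hbelow) as [t [c [Hc Ep]]].
  rewrite Ep in Heq |- *.
  apply equidistant_normal_point_iff, pnorm_normal_point_iff in Heq; [| exact Hc ..].
  destruct Heq as [HD Hs].
  exists t. split; [exact HD |].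
  pose proof (slope_norm_ge_1 f t).
  rewrite xy_f_normal_point by (unfold D_f in HD; lra).
  f_equal. rewrite <- Hs. field. lra.
Qed.

End Equidistant.

Lemma same_norm_same_tangent_component (v1 v2 w1 w2 g : R) :
  v1 ^ 2 + v2 ^ 2 = w1 ^ 2 + w2 ^ 2 -> v1 + v2 * g = w1 + w2 * g ->
  (w1 = v1 /\ w2 = v2) \/ w1 * (1 + g ^ 2) = v1 * (1 - g ^ 2) + 2 * v2 * g.
Proof.
  intros Hnorm Hproj.
  set (k := w2 - v2).
  assert (Hw1 : w1 = v1 - k * g) by (unfold k; lra).
  assert (Hw2 : w2 = v2 + k) by (unfold k; lra).
  assert (Hk : k * (2 * (v2 - g * v1) + k * (1 + g ^ 2)) = 0).
  { replace (k * (2 * (v2 - g * v1) + k * (1 + g ^ 2)))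
      with ((v1 - k * g) ^ 2 + (v2 + k) ^ 2 - (v1 ^ 2 + v2 ^ 2)) by ring.
    rewrite <- Hw1, <- Hw2, Hnorm. ring. }
  destruct (Rmult_integral _ _ Hk) as [Hk0 | Hrefl]; [left; rewrite Hw1, Hw2, Hk0; split; ring | right].
  rewrite Hw1.
  replace ((v1 - k * g) * (1 + g ^ 2)) with (v1 * (1 + g ^ 2) - g * (k * (1 + g ^ 2)))
    by ring.
  replace (k * (1 + g ^ 2)) with (-2 * (v2 - g * v1)) by lra. ring.
Qed.

(* The unit vectors from the origin and from (T, F) to (X, Y) have the same
   component along the tangent (1, g), so they are equal or mirror images in the
   normal line; equality would put (T, F) on the circle of radius Rr. *)
Lemma stationary_point_reflection (Rr X Y g T F s : R) :
  0 < Rr -> 0 < s -> sqrt (X ^ 2 + Y ^ 2) = Rr + s ->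
  (X - T) ^ 2 + (Y - F) ^ 2 = s ^ 2 ->
  (X + Y * g) / (Rr + s) = ((X - T) + (Y - F) * g) / s ->
  Rr ^ 2 < T ^ 2 + F ^ 2 ->
  X - (sqrt (X ^ 2 + Y ^ 2) - Rr) / sqrt (X ^ 2 + Y ^ 2) *
      ((X * (1 - g ^ 2) + 2 * Y * g) / (1 + g ^ 2)) = T.
Proof.
  intros HR Hs Hr Hdist Hstat Hfar. rewrite Hr.
  set (r := Rr + s) in *.
  assert (Hr0 : 0 < r) by (unfold r; lra).
  assert (Hr2 : r ^ 2 = X ^ 2 + Y ^ 2).
  { rewrite <- Hr. apply pow2_sqrt. nra. }
  pose proof (pow2_ge_0 g).
  destruct (same_norm_same_tangent_component (s / r * X) (s / r * Y) (X - T) (Y - F) g)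
    as [[E1 E2] | E].
  - rewrite Hdist.
    replace ((s / r * X) ^ 2 + (s / r * Y) ^ 2) with (s ^ 2 / r ^ 2 * (X ^ 2 + Y ^ 2))
      by (field; lra).
    rewrite <- Hr2. field. lra.
  - replace (s / r * X + s / r * Y * g) with (s * ((X + Y * g) / r)) by (field; lra).
    rewrite Hstat. field. lra.
  - exfalso.
    assert (ET : T = Rr / r * X).
    { replace T with (X - s / r * X) by lra. unfold r. field. lra. }
    assert (EF : F = Rr / r * Y).
    { replace F with (Y - s / r * Y) by lra. unfold r. field. lra. }
    rewrite ET, EF in Hfar.
    replace ((Rr / r * X) ^ 2 + (Rr / r * Y) ^ 2) with (Rr ^ 2 / r ^ 2 * (X ^ 2 + Y ^ 2))
      in Hfar by (field; lra).
    rewrite <- Hr2 in Hfar. field_simplify in Hfar; lra.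
  - replace (r - Rr) with s by (unfold r; ring).
    enough (ET : X - T = s / r * ((X * (1 - g ^ 2) + 2 * Y * g) / (1 + g ^ 2))) by lra.
    apply (Rmult_eq_reg_r (1 + g ^ 2)); [| lra].
    rewrite E. field. lra.
Qed.

Lemma is_derive_sqrt_gap (G : R -> R) (Rr t F x0 r s : R) :
  ex_derive G x0 -> 0 < r -> 0 < s ->
  sqrt (x0 ^ 2 + G x0 ^ 2) = r -> sqrt ((x0 - t) ^ 2 + (G x0 - F) ^ 2) = s ->
  is_derive (fun x => sqrt (x ^ 2 + G x ^ 2) - Rr - sqrt ((x - t) ^ 2 + (G x - F) ^ 2)) x0
    ((x0 + G x0 * Derive G x0) / r - ((x0 - t) + (G x0 - F) * Derive G x0) / s).
Proof.
  intros HG Hr0 Hs0 Hr Hs.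
  assert (Hr' : sqrt (x0 * (x0 * 1) + G x0 * (G x0 * 1)) = r)
    by (rewrite <- Hr; f_equal; ring).
  assert (Hs' : sqrt ((x0 + - t) * ((x0 + - t) * 1) + (G x0 + - F) * ((G x0 + - F) * 1)) = s)
    by (rewrite <- Hs; f_equal; ring).
  auto_derive.
  - repeat split; try exact HG; apply sqrt_lt_0_alt; rewrite sqrt_0.
    + now rewrite Hr'.
    + now rewrite Hs'.
  - change (fun x : R => G x) with G. rewrite Hr', Hs'. field. lra.
Qed.

Section EquidistantGraph.

Variables (Rr : R) (f G : R -> R).
Hypothesis HR : 0 < Rr.
Hypothesis Hadm : admissible Rr f.
Hypothesis HG : forall x, ex_derive G x.
Hypothesis Hgraph :
  forall p, equidistant_set (disk Rr) (epigraph f) p <-> snd p = G (fst p).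

(* x |-> d((x, G x), K) - |(x, G x) - (t, f t)| is at most 0 since (x, G x) is
   equidistant, and vanishes at x = x_f t, so its derivative vanishes there. *)
Lemma h_of_x_f (t : R) : D_f Rr f t -> h_of Rr G (x_f Rr f t) = t.
Proof.
  intro HD. unfold D_f in HD. pose proof (slope_norm_ge_1 f t).
  pose proof (proj2 (proj2 (proj2 Hadm))) as Hout.
  set (c := equid_dist Rr f t / slope_norm f t).
  assert (Hc : 0 < c).
  { pose proof (Hout t). apply Rdiv_lt_0_compat; [apply Rdiv_lt_0_compat |]; lra. }
  pose proof (xy_f_normal_point Rr f t ltac:(lra)) as Exy. fold c in Exy.
  assert (HGx : G (x_f Rr f t) = y_f Rr f t).
  { symmetry. apply (Hgraph (x_f Rr f t, y_f Rr f t)), equidistant_xy_f; auto. }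
  set (x0 := x_f Rr f t) in *.
  set (s := c * slope_norm f t).
  assert (Hr : pnorm (x0, G x0) = Rr + s).
  { rewrite HGx, Exy. apply (equidistant_normal_point_iff Rr f HR Hadm _ _ Hc).
    rewrite <- Exy. apply equidistant_xy_f; auto. }
  assert (Hq : edist (x0, G x0) (t, f t) = s).
  { rewrite HGx, Exy. apply edist_normal_point. lra. }
  set (phi := fun x => pnorm (x, G x) - Rr - edist (x, G x) (t, f t)).
  assert (Hmax : forall x, phi x <= phi x0).
  { intro x. unfold phi. rewrite Hr, Hq.
    enough (pnorm (x, G x) - Rr <= edist (x, G x) (t, f t)) by lra.
    apply (equidistant_pnorm_sub_le Rr f); [lra | now apply Hgraph |].
    unfold epigraph; cbn [fst snd]; lra. }
  assert (Hs : 0 < s) by (unfold s; nra).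
  pose proof (is_derive_global_max phi x0 _ Hmax
    (is_derive_sqrt_gap G Rr t (f t) x0 (Rr + s) s (HG x0) ltac:(lra) Hs Hr Hq)) as Hstat.
  unfold edist in Hq; cbn [fst snd] in Hq.
  unfold h_of. apply (stationary_point_reflection Rr x0 (G x0) (Derive G x0) t (f t) s);
    auto; [| lra | apply Hout].
  rewrite <- Hq. symmetry. apply pow2_sqrt.
  pose proof (pow2_ge_0 (x0 - t)). pose proof (pow2_ge_0 (G x0 - f t)). lra.
Qed.

End EquidistantGraph.

Section Parameterization.

Variables (Rr : R) (G : R -> R) (a b : Rbar) (hinv : R -> R).
Hypothesis HR : 0 < Rr.
Hypothesis Hh_range : forall x, rbar_interval a b (h_of Rr G x).
Hypothesis Hhinv_h : forall x, hinv (h_of Rr G x) = x.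
Hypothesis Hh_hinv : forall t, rbar_interval a b t -> h_of Rr G (hinv t) = t.

Lemma param_of_equidistant_graph (f : R -> R) :
  admissible Rr f -> (forall x, ex_derive G x) ->
  (forall p, equidistant_set (disk Rr) (epigraph f) p <-> snd p = G (fst p)) ->
  (forall t, D_f Rr f t <-> rbar_interval a b t) /\
  (forall t, rbar_interval a b t -> x_f Rr f t = hinv t /\ y_f Rr f t = G (hinv t)).
Proof.
  intros Hadm HG Hgraph.
  pose proof (h_of_x_f Rr f G HR Hadm HG Hgraph) as Hhx.
  assert (HDJ : forall t, D_f Rr f t <-> rbar_interval a b t).
  { intro t. split.
    - intro HD. rewrite <- (Hhx t HD). apply Hh_range.
    - intro HJ.
      destruct (equidistant_is_xy_f Rr f HR Hadm (hinv t, G (hinv t)))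
        as [t' [HD' Ep]]; [now apply Hgraph |].
      injection Ep as Ex _.
      replace t with t'; [exact HD' |].
      now rewrite <- (Hh_hinv t HJ), Ex, Hhx. }
  split; [exact HDJ |].
  intros t HJ. apply HDJ in HJ.
  assert (Ex : hinv t = x_f Rr f t) by (rewrite <- (Hhx t HJ) at 1; apply Hhinv_h).
  rewrite Ex. split; [reflexivity |].
  apply (Hgraph (x_f Rr f t, y_f Rr f t)), equidistant_xy_f; auto.
Qed.

Lemma equidistant_graph_of_param (f : R -> R) :
  admissible Rr f -> (forall t, D_f Rr f t <-> rbar_interval a b t) ->
  (forall t, rbar_interval a b t -> x_f Rr f t = hinv t /\ y_f Rr f t = G (hinv t)) ->
  forall p, equidistant_set (disk Rr) (epigraph f) p <-> snd p = G (fst p).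
Proof.
  intros Hadm HDJ Hxy [p1 p2]. cbn [fst snd]. split.
  - intro Heq. destruct (equidistant_is_xy_f Rr f HR Hadm _ Heq) as [t [HD Ep]].
    destruct (Hxy t (proj1 (HDJ t) HD)) as [Ex Ey].
    injection Ep as -> ->. now rewrite Ex, Ey.
  - intros ->.
    destruct (Hxy _ (Hh_range p1)) as [Ex Ey]. rewrite Hhinv_h in Ex, Ey.
    replace (p1, G p1) with (x_f Rr f (h_of Rr G p1), y_f Rr f (h_of Rr G p1))
      by now rewrite Ex, Ey.
    apply equidistant_xy_f, HDJ, Hh_range; auto.
Qed.

End Parameterization.

Theorem theorem9 (Rr : R) (G : R -> R) (a b : Rbar) (hinv : R -> R) :
  0 < Rr ->
  C2 G ->
  (forall x, x ^ 2 + G x ^ 2 > 0) ->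
  Rbar_lt a 0 -> Rbar_lt 0 b ->
  (* h is a bijection from R onto J = (a,b), with inverse hinv *)
  (forall x, rbar_interval a b (h_of Rr G x)) ->
  (forall x, hinv (h_of Rr G x) = x) ->
  (forall t, rbar_interval a b t -> h_of Rr G (hinv t) = t) ->
  (forall x, Derive (h_of Rr G) x <> 0) ->
  (equidistant_function Rr G <->
   exists f, admissible Rr f /\
     (forall t, D_f Rr f t <-> rbar_interval a b t) /\
     (forall t, rbar_interval a b t ->
        x_f Rr f t = hinv t /\ y_f Rr f t = G (hinv t))).
Proof.
  intros HR [HG _] _ _ _ Hh_range Hhinv_h Hh_hinv _. split.
  - intros [f [Hadm Hgraph]]. exists f. split; [exact Hadm |].
    now apply (param_of_equidistant_graph Rr G a b hinv).
  - intros [f [Hadm [HDJ Hxy]]]. exists f. split; [exact Hadm |].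
    now apply (equidistant_graph_of_param Rr G a b hinv).
Qed.
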